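(* Let $\nu\in\mathfrak{M}_L(\mathbb{R}^d)$. Then $\Upsilon^0(\nu)\in\mathfrak{M}_L^1(\mathbb{R}^d)$ if and only if $\nu\in\mathfrak{M}_L^1(\mathbb{R}^d)$.
   Context: A Lévy measure on $\mathbb{R}^d$ is a measure $\nu$ with $\nu(\{0\})=0$ and $\int(1\wedge|x|^2)\nu(\mathrm{d}x)<\infty$; their class is $\mathfrak{M}_L(\mathbb{R}^d)$, and $\mathfrak{M}_L^1(\mathbb{R}^d)$ is the class of those with $\int(1\wedge|x|)\nu(\mathrm{d}x)<\infty$. For $\nu\in\mathfrak{M}_L(\mathbb{R}^d)$, $\Upsilon^0(\nu)(B)=\int_0^\infty\nu(u^{-1}B)e^{-u}\mathrm{d}u$ for Borel $B$, where $u^{-1}B=\{u^{-1}x:x\in B\}$ (this is again in $\mathfrak{M}_L(\mathbb{R}^d)$). *)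

From HB Require Import structures.
From mathcomp Require Import all_boot all_order all_algebra.
From mathcomp Require Import all_classical all_reals all_analysis.
Set Implicit Arguments. Unset Strict Implicit. Unset Printing Implicit Defensive.
Import Order.TTheory GRing.Theory Num.Theory.
Import numFieldNormedType.Exports.
Local Open Scope classical_set_scope.
Local Open Scope ring_scope.

(* R^d as row vectors, with the Borel sigma-algebra (generated by the open
   sets of the usual (product) topology on 'rV[R]_d). *)
Notation Rd R d := (g_sigma_algebraType (@open 'rV[R]_d)).

Definition enorm (R : realType) (d : nat) (x : Rd R d) : R :=
  Num.sqrt (\sum_(i < d) (x : 'rV[R]_d) 0 i ^+ 2).

Definition is_measure (R : realType) (d : nat) (mu : set (Rd R d) -> \bar R) :=
  mu set0 = 0%E /\
  (forall A, measurable A -> (0 <= mu A)%E) /\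
  semi_sigma_additive mu.

Definition LevyMeasure (R : realType) (d : nat) (mu : set (Rd R d) -> \bar R) :=
  is_measure mu /\
  mu [set (0 : Rd R d)] = 0%E /\
  (\int[mu]_x (Order.min 1 (enorm x ^+ 2))%:E < +oo)%E.

Definition LevyMeasure1 (R : realType) (d : nat) (mu : set (Rd R d) -> \bar R) :=
  LevyMeasure mu /\ (\int[mu]_x (Order.min 1 (enorm x))%:E < +oo)%E.

Definition invscale (R : realType) (d : nat) (u : R) (B : set (Rd R d)) :
  set (Rd R d) := (fun x : 'rV[R]_d => u^-1 *: x) @` B.

Definition Upsilon0 (R : realType) (d : nat) (nu : set (Rd R d) -> \bar R)
  (B : set (Rd R d)) : \bar R :=
  (\int[@lebesgue_measure R]_(u in `]0%R, +oo[)
     (nu (invscale u B) * (expR (- u))%:E))%E.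

From HB Require Import structures.
From mathcomp Require Import all_boot all_order all_algebra.
From mathcomp Require Import all_classical all_reals all_analysis.
From mathcomp Require Import measurable_realfun ring lra.
Set Implicit Arguments. Unset Strict Implicit. Unset Printing Implicit Defensive.
Import Order.TTheory GRing.Theory Num.Theory.
Import numFieldNormedType.Exports.
Local Open Scope classical_set_scope.
Local Open Scope ring_scope.

(* [Upsilon0 nu] is the image of [exponential_prob 1 \x nu] under (u, x) |-> u x,
   so by Tonelli [\int f d(Upsilon0 nu) = \int_0^oo (\int f (u x) nu(dx)) e^-u du]
   for f >= 0; Fubini applies because a Levy measure is sigma-finite (it
   integrates min(1, |x|^2), which vanishes only at 0).  For
   f = min(1, |x|^p), the inner integral is at least [\int f dnu] when u >= 1
   and at most [(1 + u^p) \int f dnu] when u >= 0.  As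
   [\int_0^oo (1 + u^p) e^-u du] is finite for p <= 2 and [\int_1^oo e^-u du]
   is positive, [\int f d(Upsilon0 nu)] is finite iff [\int f dnu] is; p = 2
   shows that [Upsilon0 nu] is again a Levy measure and p = 1 gives the
   equivalence. *)

Section integral_density.
Local Open Scope ereal_scope.
Context d (T : measurableType d) (R : realType).
Import HBNNSimple.

Lemma eq_setfun_integral (m1 m2 : set T -> \bar R) (f : T -> \bar R) :
  (forall A, measurable A -> m1 A = m2 A) ->
  \int[m1]_x f x = \int[m2]_x f x.
Proof.
move=> m12; rewrite /integral.
by congr (ereal_sup _ - ereal_sup _); rewrite eqEsubset; split;
  move=> _ [h hf <-]; exists h => //; apply: eq_fsbigr => r _; rewrite m12.
Qed.

Variables (nu : {finite_measure set T -> \bar R})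
  (mu : {sigma_finite_measure set T -> \bar R}) (g : T -> R).
Hypotheses (mg : measurable_fun setT g)
  (nuE : forall A, measurable A -> nu A = \int[mu]_(x in A) (g x)%:E).

Lemma ge0_integral_density (f : T -> \bar R) :
  (forall x, 0 <= f x) -> measurable_fun setT f ->
  \int[nu]_x f x = \int[mu]_x (f x * (g x)%:E).
Proof.
move=> f0 mf.
have mEg : measurable_fun setT (EFin \o g) by exact/measurable_EFinP.
have numu : nu `<< mu.
  apply/null_content_dominatesP => A mA muA0; rewrite nuE//.
  apply: null_set_integral => //.
  exact: measurable_funTS.
rewrite -(Radon_Nikodym_SigmaFinite.change_of_variables numu)//.
have intRN := Radon_Nikodym_SigmaFinite.f_integrable numu.
apply: ae_eq_integral => //.
- by apply: emeasurable_funM => //; exact: measurable_int intRN.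
- exact: emeasurable_funM.
apply: ae_eqe_mul2l; apply: integral_ae_eq => // A _ mA.
by rewrite -Radon_Nikodym_SigmaFinite.f_integral// nuE.
Qed.

End integral_density.

Section min1_scale.
Context (R : realFieldType).
Implicit Types (p : nat) (u e : R).

Lemma min1_exprMl_le p u e : 0 <= u -> 0 <= e ->
  Order.min 1 ((u * e) ^+ p) <= (1 + u ^+ p) * Order.min 1 (e ^+ p).
Proof.
move=> u0 e0; have up : 0 <= u ^+ p by rewrite exprn_ge0.
have ep : 0 <= e ^+ p by rewrite exprn_ge0.
have uep : 0 <= u ^+ p * e ^+ p by rewrite mulr_ge0.
by rewrite exprMn /Order.min; case: ifPn => h1; case: ifPn => h2; nra.
Qed.

Lemma min1_exprMl_ge p u e : 1 <= u -> 0 <= e ->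
  Order.min 1 (e ^+ p) <= Order.min 1 ((u * e) ^+ p).
Proof.
move=> u1 e0; apply: le_min2 => //.
by rewrite exprMn -[leLHS]mul1r ler_wpM2r ?exprn_ge0 ?exprn_ege1.
Qed.

End min1_scale.

Lemma gt0_mulr_lty (R : realDomainType) (x : \bar R) (r : R) : 0 < r ->
  (0 <= x)%E -> (x * r%:E < +oo)%E -> (x < +oo)%E.
Proof. by move=> r0; case: x => [x _ _| |//]; [exact: ltry|rewrite gt0_mulye]. Qed.

Section sigma_finite_integral.
Local Open Scope ereal_scope.
Context d (T : measurableType d) (R : realType).
Variables (mu : {measure set T -> \bar R}) (f : T -> R).
Hypotheses (mf : measurable_fun setT f) (f0 : forall x, (0 <= f x)%R).

Let measurable_gtr (e : R) : measurable [set x | (e < f x)%R].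
Proof.
rewrite -[X in measurable X]setTI (_ : [set x | (e < f x)%R] = f @^-1` `]e, +oo[%classic).
  exact: mf.
by apply/seteqP; split => x /=; rewrite in_itv/= andbT.
Qed.

Lemma measure_gtr_le_integral (e : R) : (0 <= e)%R ->
  e%:E * mu [set x | (e < f x)%R] <= \int[mu]_x (f x)%:E.
Proof.
move=> e0; rewrite -integral_cst//.
apply: (@le_trans _ _ (\int[mu]_(x in [set x | (e < f x)%R]) (f x)%:E)).
  apply: ge0_le_integral => //.
  - by apply/measurable_EFinP; exact: measurable_funTS.
  - by move=> x /= /ltW; rewrite lee_fin.
apply: ge0_subset_integral => //; first exact/measurable_EFinP.
by move=> x _; rewrite lee_fin.
Qed.

Lemma sigma_finite_integral_lty : mu [set x | f x = 0%R] < +oo ->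
  \int[mu]_x (f x)%:E < +oo -> sigma_finite setT mu.
Proof.
move=> mu0 intf.
exists (fun n => if n is k.+1 then [set x | (k.+1%:R^-1 < f x)%R]
                 else [set x | f x = 0%R]).
  apply/seteqP; split => // x _.
  have [fx0|fx0] := eqVneq (f x) 0%R; first by exists 0%N.
  have fx_gt0 : (0 < f x)%R by rewrite lt0r fx0 f0.
  exists (Num.truncn (f x)^-1).+1 => //=.
  by rewrite -[ltRHS]invrK ltf_pV2 ?posrE ?invr_gt0// truncnS_gt.
case=> [|k]; split => //.
  rewrite (_ : [set x | f x = 0%R] = f @^-1` [set 0%R]) //.
  by rewrite -[X in measurable X]setTI; exact: mf.
have k0 : (0 <= k.+1%:R^-1 :> R)%R by rewrite invr_ge0.
apply: (@gt0_mulr_lty _ _ k.+1%:R^-1); rewrite ?invr_gt0//.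
by rewrite muleC; exact: le_lt_trans (measure_gtr_le_integral k0) intf.
Qed.

End sigma_finite_integral.

Section exponential_weight.
Context (R : realType).
Local Notation leb := (@lebesgue_measure R).

Lemma measurable_expRN : measurable_fun setT (fun u : R => expR (- u)).
Proof. by apply: measurableT_comp => //; exact: measurable_funN. Qed.

Lemma integral_exponential_prob1 (f : R -> \bar R) :
  (forall x, (0 <= f x)%E) -> measurable_fun setT f ->
  (\int[exponential_prob 1]_x f x =
   \int[leb]_(u in `]0%R, +oo[) (f u * (expR (- u))%:E))%E.
Proof.
move=> f0 mf.
rewrite (@ge0_integral_density _ _ _ (exponential_prob 1) leb (exponential_pdf 1)
  (measurable_exponential_pdf 1) (fun _ _ => erefl))//.
have mfe : measurable_fun setT (fun u => (f u * (expR (- u))%:E)%E).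
  by apply: emeasurable_funM => //; apply/measurable_EFinP; exact: measurable_expRN.
rewrite integral_itv_obnd_cbnd; last exact: measurable_funTS.
rewrite [RHS]integral_mkcond; apply: eq_integral => u _.
rewrite patchE; case: ifPn => [|u0].
  by rewrite inE/= in_itv/= andbT => u0; rewrite exponential_pdfE// mul1r mulN1r.
rewrite /exponential_pdf patchE ifF ?mule0//.
by apply: contraNF u0; rewrite !inE.
Qed.

Lemma powD1_expRN_le (p : nat) (u : R) : (p <= 2)%N -> 0 <= u ->
  (1 + u ^+ p) * expR (- u) <= 32 * exponential_pdf 2^-1 u.
Proof.
move=> p2 u0; rewrite exponential_pdfE// mulrA mulNr (mulrC _ u).
have hE : 1 + u / 4 <= expR (u / 4) by exact: expR_ge1Dx.
have hp : 1 + u ^+ p <= 16 * (1 + u / 4) ^+ 2.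
  by move: p2; case: p => [|[|[|//]]] _; rewrite ?expr0 ?expr1 expr2; nra.
have hE2 : (1 + u / 4) ^+ 2 <= expR (u / 2).
  rewrite (_ : u / 2 = u / 4 + u / 4); last by field.
  by rewrite expRD expr2; apply: ler_pM => //; lra.
have -> : 32 * 2^-1 * expR (- (u / 2)) = 16 * expR (u / 2) * expR (- u).
  by rewrite -[RHS]mulrA -expRD; congr (_ * expR _); field.
by rewrite ler_wpM2r ?expR_ge0//; nra.
Qed.

Lemma integral_powD1_expRN_lty (p : nat) : (p <= 2)%N ->
  (\int[leb]_(u in `]0%R, +oo[) ((1 + u ^+ p) * expR (- u))%:E < +oo)%E.
Proof.
move=> p2.
have mpdf : measurable_fun setT (fun u => (32 * @exponential_pdf R 2^-1 u)%:E).
  apply/measurable_EFinP; apply: measurable_funM => //.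
  exact: measurable_exponential_pdf.
apply: (@le_lt_trans _ _ (\int[leb]_u (32 * exponential_pdf 2^-1 u)%:E)%E).
  apply: (@le_trans _ _ (\int[leb]_(u in `]0%R, +oo[) (32 * exponential_pdf 2^-1 u)%:E)%E).
    apply: ge0_le_integral => //.
    - by move=> u; rewrite /= in_itv/= andbT => /ltW u0;
        rewrite lee_fin mulr_ge0 ?expR_ge0// addr_ge0// exprn_ge0.
    - apply/measurable_funTS/measurable_EFinP.
      apply: measurable_funM; last exact: measurable_expRN.
      by apply: measurable_funD => //; exact: measurable_funX.
    - exact: measurable_funTS.
    - by move=> u; rewrite /= in_itv/= andbT => /ltW u0; rewrite lee_fin powD1_expRN_le.
  apply: ge0_subset_integral => //= u _.
  by rewrite lee_fin mulr_ge0// exponential_pdf_ge0.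
under eq_integral do rewrite EFinM.
rewrite ge0_integralZl_EFin//.
- by rewrite integral_exponential_pdf ?invr_gt0// mule1 ltry.
- by move=> u _; rewrite lee_fin exponential_pdf_ge0.
- by apply/measurable_EFinP; exact: measurable_exponential_pdf.
Qed.

Lemma integral_expRN_ge (G : R -> \bar R) (c : \bar R) :
  measurable_fun setT G -> (forall u, (0 <= G u)%E) -> (0 <= c)%E ->
  (forall u, 1 <= u -> (c <= G u)%E) ->
  (c * (expR (- 2))%:E <= \int[leb]_(u in `]0%R, +oo[) (G u * (expR (- u))%:E))%E.
Proof.
move=> mG G0 c0 cG.
have mGe : measurable_fun setT (fun u => G u * (expR (- u))%:E)%E.
  by apply: emeasurable_funM => //; apply/measurable_EFinP; exact: measurable_expRN.
have Ge0 u : (0 <= G u * (expR (- u))%:E)%E by rewrite mule_ge0// lee_fin expR_ge0.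
apply: (@le_trans _ _ (\int[leb]_(u in `[1%R, 2%R]) (G u * (expR (- u))%:E))%E); last first.
  apply: ge0_subset_integral => //; first exact: measurable_funTS.
  move=> u; rewrite /= !in_itv/= andbT => /andP[u1 _].
  exact: lt_le_trans ltr01 u1.
apply: (@le_trans _ _ (\int[leb]_(u in `[1%R, 2%R]) (c * (expR (- 2))%:E))%E).
  have leb12 : (1 <= leb (`[1%R, 2%R]%classic : set (measurableTypeR R)))%E.
    by rewrite lebesgue_measure_itv/= lte_fin ltr1n -EFinD lee_fin; lra.
  rewrite integral_cst//.
  by rewrite -[leLHS]mule1 lee_wpmul2l// mule_ge0// lee_fin expR_ge0.
apply: ge0_le_integral => //.
- by move=> u _; rewrite mule_ge0// lee_fin expR_ge0.
- exact: measurable_funTS.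
- move=> u; rewrite /= in_itv/= => /andP[u1 u2].
  apply: lee_pmul; [exact: c0|by rewrite lee_fin expR_ge0|exact: cG|].
  by rewrite lee_fin ler_expR lerN2.
Qed.

End exponential_weight.

Section borel_scale.
Context (R : realType) (V : normedModType R).
Local Notation B := (g_sigma_algebraType (@open V)).

Lemma open_measurable_borel (A : set V) : open A -> measurable (A : set B).
Proof. exact: sub_sigma_algebra. Qed.

Lemma continuous_measurable_borel (f : V -> R) :
  continuous f -> measurable_fun setT (f : B -> R).
Proof.
move=> cf; apply: (@measurability _ _ B R setT f _ (RGenOpens.measurableE R)).
move=> _ [_ [a [b ->]] <-]; rewrite setTI; apply: open_measurable_borel.
by move/continuousP: cf; apply; exact: interval_open.
Qed.

Definition ball_within (O : set V) (r : R) : set V := [set y | ball y r `<=` O].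

Lemma open_setC_ball_within O r : open (~` ball_within O r).
Proof.
have -> : ~` ball_within O r = \bigcup_(z in ~` O) ball z r.
  apply/seteqP; split => y /=.
    by move=> /existsNP[z] /not_implyP[yz Oz]; exists z => //; exact: ball_sym.
  by move=> [z Oz] /ball_sym zy; apply/existsNP; exists z; apply/not_implyP.
by apply: bigcup_open => z _; exact: ball_open.
Qed.

(* The measurable structure on [R * B] is the product of the Borel
   sigma-algebras, so measurability of scaling goes through a countable cover
   of [scale_uncurry @^-1` O] by rational boxes: if |u - q| < r / (2 (m + 1))
   and |x| < m + 1, then |u x - q x| < r / 2, so u x lies in O as soon as
   ball (q x) r does. *)
Definition scale_box (O : set V) (q r : rat) (m : nat) : set (R * B) :=
  if 0 < ratr r :> R then
   `](ratr q - ratr r / (2 * m.+1%:R)), (ratr q + ratr r / (2 * m.+1%:R))[%classic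
   `*` [set x | `|x| < m.+1%:R /\ ball_within O (ratr r) (ratr q *: x)]
  else set0.

Lemma measurable_scale_box O q r m : measurable (scale_box O q r m).
Proof.
rewrite /scale_box; case: ifPn => r0 //; apply: measurableX => //.
have -> : [set x : B | `|x| < m.+1%:R /\ ball_within O (ratr r) (ratr q *: x)] =
  ball (0 : V) m.+1%:R `&` ~` ( *:%R (ratr q : R) @^-1` (~` ball_within O (ratr r))).
  apply/seteqP; split => x /=.
    move=> [xm cx]; split => [|/(_ cx)//].
    by rewrite -ball_normE /ball_ /= sub0r normrN.
  rewrite -ball_normE /ball_ /= sub0r normrN.
  by move=> [xm /contrapT].
apply: measurableI; first by apply: open_measurable_borel; exact: ball_open.
apply: measurableC; apply: open_measurable_borel.
by move: (open_setC_ball_within O (ratr r)); apply: (proj1 (continuousP _)); exact: scaler_continuous.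
Qed.

Lemma normZ_lt_half (a : R) (b : V) (r M : R) : 0 < M ->
  `|a| < r / (2 * M) -> `|b| < M -> `|a *: b| < r / 2.
Proof.
move=> M0 ar bM; rewrite normrZ.
have : `|a| * `|b| <= `|a| * M by rewrite ler_wpM2l // ltW.
have : `|a| * M < r / (2 * M) * M by rewrite ltr_pM2r.
have -> : r / (2 * M) * M = r / 2 by field; rewrite gt_eqF.
lra.
Qed.

Definition scale_uncurry (z : R * B) : B := z.1 *: (z.2 : V).

Lemma preimage_scale_open (O : set V) : open O ->
  scale_uncurry @^-1` O =
  \bigcup_q \bigcup_r \bigcup_m scale_box O q r m.
Proof.
move=> oO; apply/seteqP; split.
- move=> [u x] /= Oux.
  have /nbhs_ballP[e /= e0 ballsub] : nbhs (u *: x) O by exact: open_nbhs_nbhs.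
  have xm := truncnS_gt `|x|; set m := Num.truncn _ in xm.
  have /rat_in_itvoo[r] : 0 < e / 2 by rewrite divr_gt0.
  rewrite in_itv /= => /andP[r0 re].
  pose del : R := ratr r / (2 * m.+1%:R).
  have del0 : 0 < del by rewrite divr_gt0 // mulr_gt0.
  have /rat_in_itvoo[q] : u - del < u + del by lra.
  rewrite in_itv /= => /andP[q1 q2].
  exists q => //; exists r => //; exists m => //.
  rewrite /scale_box r0; split; first by rewrite /= in_itv /= -/del; apply/andP; split; lra.
  split => //= z /ball_sym; rewrite -ball_normE /ball_ /= => qxz; apply: ballsub.
  rewrite -ball_normE /ball_ /=.
  have : `|(u - ratr q) *: x| < ratr r / 2.
    by apply: (normZ_lt_half (M := m.+1%:R)) => //; rewrite -/del ltr_distlC q1 q2.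
  rewrite scalerBl => uqx.
  rewrite distrC in qxz.
  have := ler_distD (ratr q *: x) (u *: x) z; lra.
- move=> [u x] [q _ [r _ [m _]]]; rewrite /scale_box; case: ifPn => r0 // -[/=].
  rewrite in_itv /= => /andP[q1 q2] [xm]; apply.
  rewrite -ball_normE /ball_ /= -scalerBl.
  have : `|(ratr q - u) *: x| < ratr r / 2.
    by apply: (normZ_lt_half (M := m.+1%:R)) => //; rewrite ltr_distlC q1 q2.
  lra.
Qed.

Lemma measurable_scale_uncurry : measurable_fun setT scale_uncurry.
Proof.
apply: measurability; first reflexivity.
move=> _ [A oA <-]; rewrite setTI preimage_scale_open //.
apply: bigcupT_measurable_rat => q; apply: bigcupT_measurable_rat => r.
apply: bigcupT_measurable => m; exact: measurable_scale_box.
Qed.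

End borel_scale.

Section upsilon_integral.
Context (R : realType) (d : nat).
Local Notation T := (Rd R d).
Variable nu : {measure set T -> \bar R}.
Hypothesis nu_sf : sigma_finite setT nu.

Let nuS : set T -> \bar R := nu.
HB.instance Definition _ := Measure.on nuS.
HB.instance Definition _ := Measure_isSigmaFinite.Build _ _ _ nuS nu_sf.

Let P := (exponential_prob (1 : R) \x nuS)%E.
Let scale : R * T -> T := @scale_uncurry R 'rV[R]_d.
Let measurable_scale : measurable_fun setT scale := @measurable_scale_uncurry R 'rV[R]_d.

Let measurable_preimage_scale (B : set T) : measurable B ->
  measurable (scale @^-1` B).
Proof. by move=> mB; rewrite -[X in measurable X]setTI; exact: measurable_scale. Qed.

Lemma xsection_scale_uncurry (u : R) (B : set T) : 0 < u ->
  xsection (scale @^-1` B) u = invscale u B.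
Proof.
move=> u0; apply/seteqP; split => x; rewrite /xsection /invscale /= ?inE /=.
  by move=> Bux; exists (u *: x) => //; rewrite scalerA mulVf ?gt_eqF ?scale1r.
by move=> [y By <-]; rewrite /scale /scale_uncurry /= scalerA mulfV ?gt_eqF ?scale1r.
Qed.

Lemma Upsilon0_pushforward (B : set T) : measurable B ->
  Upsilon0 nu B = pushforward P scale B.
Proof.
move=> mB; rewrite /pushforward /P /product_measure1 /= integral_exponential_prob1//.
  apply: eq_integral => u; rewrite inE /= in_itv /= andbT => u0.
  by rewrite /= xsection_scale_uncurry.
by apply: measurable_fun_xsection; exact: measurable_preimage_scale.
Qed.

Lemma is_measure_Upsilon0 : is_measure (Upsilon0 nu).
Proof.
split; first by rewrite Upsilon0_pushforward// /pushforward preimage_set0 /P measure0.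
split.
  by move=> A mA; rewrite Upsilon0_pushforward// /pushforward /P; exact: measure_ge0.
move=> F mF tF mUF; rewrite Upsilon0_pushforward//.
have -> : (fun n => \sum_(0 <= i < n) Upsilon0 nu (F i)) =
    (fun n => \sum_(0 <= i < n) pushforward P scale (F i)).
  by apply/funext => n; apply: eq_bigr => i _; exact: Upsilon0_pushforward.
rewrite /pushforward preimage_bigcup; apply: (measure_semi_sigma_additive (s := P)).
- exact: ltr01.
- by move=> n; exact: measurable_preimage_scale.
- apply/trivIsetP => /= i j _ _ ij; rewrite -preimage_setI.
  by move/trivIsetP : tF => /(_ _ _ _ _ ij) ->//; rewrite preimage_set0.
- by rewrite -preimage_bigcup; exact: measurable_preimage_scale.
Qed.

Section integral_scale.
Variable F : T -> \bar R.
Hypotheses (F0 : forall x, (0 <= F x)%E) (mF : measurable_fun setT F).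

Let mFscale : measurable_fun setT (F \o scale).
Proof. exact: measurableT_comp. Qed.

Lemma measurable_integral_scale :
  measurable_fun setT (fun u : R => \int[nu]_x F (u *: x))%E.
Proof.
exact: (measurable_fun_fubini_tonelli_F (m2 := nuS) (F \o scale) mFscale (fun z => F0 _)).
Qed.

Lemma ge0_integral_Upsilon0 : (\int[Upsilon0 nu]_x F x =
  \int[lebesgue_measure]_(u in `]0%R, +oo[)
    ((\int[nu]_x F (u *: x)) * (expR (- u))%:E))%E.
Proof.
rewrite (eq_setfun_integral (m2 := pushforward P scale)); last exact: Upsilon0_pushforward.
rewrite /P ge0_integral_pushforward// preimage_setT.
rewrite fubini_tonelli1//; last by move=> z; exact: F0.
rewrite integral_exponential_prob1//; last exact: measurable_integral_scale.
by move=> u; apply: integral_ge0 => x _; exact: F0.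
Qed.

End integral_scale.

End upsilon_integral.

Section enorm.
Context (R : realType) (d : nat).
Local Notation T := (Rd R d).

Lemma enorm_ge0 (x : T) : 0 <= enorm x.
Proof. exact: sqrtr_ge0. Qed.

Lemma enormZ (u : R) (x : T) : enorm (u *: x) = `|u| * enorm x.
Proof.
rewrite /enorm; under eq_bigr do rewrite mxE exprMn.
by rewrite -mulr_sumr sqrtrM ?sqr_ge0// sqrtr_sqr.
Qed.

Lemma enorm0 : enorm (0 : T) = 0.
Proof. by rewrite /enorm big1 ?sqrtr0// => i _; rewrite mxE expr0n. Qed.

Lemma enorm_eq0 (x : T) : enorm x = 0 -> x = 0 :> 'rV[R]_d.
Proof.
rewrite /enorm => /eqP; rewrite sqrtr_eq0 => sum_le0.
have sum0 : \sum_(i < d) (x : 'rV[R]_d) 0 i ^+ 2 = 0.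
  by apply/eqP; rewrite eq_le sum_le0 sumr_ge0// => i _; exact: sqr_ge0.
apply/rowP => i; rewrite mxE; apply/eqP; rewrite -sqrf_eq0; apply/eqP.
exact: (psumr_eq0P (fun j _ => sqr_ge0 ((x : 'rV[R]_d) 0 j)) sum0).
Qed.

Lemma measurable_enorm : measurable_fun setT (@enorm R d).
Proof.
apply: measurableT_comp.
  by apply: continuous_measurable_fun; exact: sqrt_continuous.
apply: measurable_sum => i; apply: measurable_funX.
apply: continuous_measurable_borel; exact: coord_continuous.
Qed.

Definition min1_enorm (p : nat) (x : T) : R := Order.min 1 (enorm x ^+ p).

Lemma min1_enorm_ge0 p x : 0 <= min1_enorm p x.
Proof. by rewrite /min1_enorm le_min ler01 exprn_ge0 ?enorm_ge0. Qed.

Lemma min1_enorm_EFin_ge0 p x : (0 <= (min1_enorm p x)%:E)%E.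
Proof. by rewrite lee_fin min1_enorm_ge0. Qed.

Lemma measurable_min1_enorm p : measurable_fun setT (min1_enorm p).
Proof. by apply: measurable_minr => //; apply: measurable_funX; exact: measurable_enorm. Qed.

Lemma measurable_min1_enorm_EFin p :
  measurable_fun setT (fun x => (min1_enorm p x)%:E).
Proof. by apply/measurable_EFinP; exact: measurable_min1_enorm. Qed.

Lemma min1_enorm2_eq0 (x : T) : (min1_enorm 2 x = 0) <-> x = 0 :> 'rV[R]_d.
Proof.
rewrite /min1_enorm /Order.min; split => [|->].
  case: ifPn => [_ /eqP|_ /eqP]; first by rewrite oner_eq0.
  by rewrite sqrf_eq0 => /eqP; exact: enorm_eq0.
by rewrite enorm0 expr0n /= /Order.min ltr10.
Qed.

End enorm.

Section levy.
Local Open Scope ereal_scope.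
Context (R : realType) (d : nat) (nu : {measure set (Rd R d) -> \bar R}).
Local Notation T := (Rd R d).

Lemma Upsilon0_set0 : nu [set 0%R] = 0 -> Upsilon0 nu [set 0%R] = 0.
Proof.
move=> nu0; rewrite /Upsilon0 (eq_integral (cst 0)) ?integral0// => u _.
by rewrite /invscale image_set1 scaler0 nu0 mul0e.
Qed.

Lemma LevyMeasure_sigma_finite : LevyMeasure nu -> sigma_finite setT nu.
Proof.
case=> _ [nu0 intnu]; apply: (@sigma_finite_integral_lty _ _ _ _ (min1_enorm 2)).
- exact: measurable_min1_enorm.
- exact: min1_enorm_ge0.
- rewrite (_ : [set x | _] = [set 0%R]) ?nu0 ?ltry//.
  by apply/seteqP; split => x /=; rewrite min1_enorm2_eq0.
- exact: intnu.
Qed.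

Let measurable_scaler (u : R) : measurable_fun setT (fun x : T => (u *: x : T)%R).
Proof.
rewrite (_ : (fun x => _) = @scale_uncurry R 'rV[R]_d \o pair u)//.
exact: measurableT_comp (@measurable_scale_uncurry R _) (measurable_fun_pair _ _).
Qed.

Lemma integral_min1_enorm_scale_le (p : nat) (u : R) : (0 <= u)%R ->
  \int[nu]_x (min1_enorm p (u *: x))%:E <=
  (1 + u ^+ p)%:E * \int[nu]_x (min1_enorm p x)%:E.
Proof.
move=> u0; have up : (0 <= 1 + u ^+ p)%R by rewrite addr_ge0// exprn_ge0.
rewrite -(ge0_integralZl_EFin nu measurableT _ (measurable_min1_enorm_EFin p) up); last first.
  by move=> x _; exact: min1_enorm_EFin_ge0.
apply: ge0_le_integral => //.
- by move=> x _; exact: min1_enorm_EFin_ge0.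
- exact: (measurableT_comp (measurable_min1_enorm_EFin p) (measurable_scaler u)).
- apply/measurable_EFinP; apply: measurable_funM => //; exact: measurable_min1_enorm.
move=> x _; rewrite -EFinM lee_fin /min1_enorm enormZ ger0_norm//.
exact/min1_exprMl_le/enorm_ge0.
Qed.

Lemma integral_min1_enorm_scale_ge (p : nat) (u : R) : (1 <= u)%R ->
  \int[nu]_x (min1_enorm p x)%:E <= \int[nu]_x (min1_enorm p (u *: x))%:E.
Proof.
move=> u1; apply: ge0_le_integral => //.
- by move=> x _; exact: min1_enorm_EFin_ge0.
- exact: measurable_min1_enorm_EFin.
- exact: (measurableT_comp (measurable_min1_enorm_EFin p) (measurable_scaler u)).
move=> x _; rewrite lee_fin /min1_enorm enormZ ger0_norm ?(le_trans ler01)//.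
exact/min1_exprMl_ge/enorm_ge0.
Qed.

Hypothesis nu_sf : sigma_finite setT nu.

Let measurable_integral_min1_enorm p :
  measurable_fun setT (fun u : R => \int[nu]_x (min1_enorm p (u *: x))%:E).
Proof. exact: measurable_integral_scale (@min1_enorm_EFin_ge0 _ _ p) (measurable_min1_enorm_EFin p). Qed.

Lemma Upsilon0_min1_enorm_lty (p : nat) : (p <= 2)%N ->
  \int[nu]_x (min1_enorm p x)%:E < +oo ->
  \int[Upsilon0 nu]_x (min1_enorm p x)%:E < +oo.
Proof.
move=> p2 intnu; set c := \int[nu]_x (min1_enorm p x)%:E.
have c0 : 0 <= c by apply: integral_ge0 => x _; exact: min1_enorm_EFin_ge0.
rewrite ge0_integral_Upsilon0//; [|exact: min1_enorm_EFin_ge0|exact: measurable_min1_enorm_EFin].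
have mpoly : measurable_fun setT (fun u : R => ((1 + u ^+ p) * expR (- u))%:E).
  apply/measurable_EFinP; apply: measurable_funM; last exact: measurable_expRN.
  by apply: measurable_funD => //; exact: measurable_funX.
apply: (@le_lt_trans _ _ (\int[lebesgue_measure]_(u in `]0%R, +oo[)
    (c * ((1 + u ^+ p) * expR (- u))%:E))).
  apply: ge0_le_integral => //.
  - move=> u _; rewrite mule_ge0 ?lee_fin ?expR_ge0//.
    by apply: integral_ge0 => x _; exact: min1_enorm_EFin_ge0.
  - apply/measurable_funTS/emeasurable_funM; first exact: measurable_integral_min1_enorm.
    by apply/measurable_EFinP; exact: measurable_expRN.
  - by apply/measurable_funTS/emeasurable_funM.
  move=> u; rewrite /= in_itv /= andbT => /ltW u0.
  rewrite EFinM muleA lee_wpmul2r ?lee_fin ?expR_ge0// muleC.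
  exact: integral_min1_enorm_scale_le.
rewrite ge0_integralZl//.
- by rewrite lte_mul_pinfty ?ge0_fin_numE// integral_powD1_expRN_lty.
- exact: measurable_funTS mpoly.
move=> u; rewrite /= in_itv /= andbT => /ltW u0.
by rewrite lee_fin mulr_ge0 ?expR_ge0// addr_ge0// exprn_ge0.
Qed.

Lemma min1_enorm1_lty_Upsilon0 :
  \int[Upsilon0 nu]_x (min1_enorm 1 x)%:E < +oo ->
  \int[nu]_x (min1_enorm 1 x)%:E < +oo.
Proof.
rewrite ge0_integral_Upsilon0//; [|exact: min1_enorm_EFin_ge0|exact: measurable_min1_enorm_EFin].
set c := \int[nu]_x (min1_enorm 1 x)%:E => intU.
have c0 : 0 <= c by apply: integral_ge0 => x _; exact: min1_enorm_EFin_ge0.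
apply: (@gt0_mulr_lty _ _ (expR (- 2))); rewrite ?expR_gt0//.
apply: le_lt_trans intU; apply: integral_expRN_ge => //.
- by move=> u; apply: integral_ge0 => x _; exact: min1_enorm_EFin_ge0.
- by move=> u u1; exact: integral_min1_enorm_scale_ge.
Qed.

End levy.

Theorem proposition3p3 (R : realType) (d : nat)
  (nu : {measure set (Rd R d) -> \bar R}) :
  LevyMeasure nu -> (LevyMeasure1 (Upsilon0 nu) <-> LevyMeasure1 nu).
Proof.
move=> hL; have nu_sf := LevyMeasure_sigma_finite hL.
have [_ [nu0 intnu2]] := hL.
split=> [[_ intU]|[_ intnu1]].
  by split=> //; exact: min1_enorm1_lty_Upsilon0 intU.
split; last exact: (Upsilon0_min1_enorm_lty nu_sf (p := 1)).
split; first exact: is_measure_Upsilon0.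
split; first exact: Upsilon0_set0.
exact: (Upsilon0_min1_enorm_lty nu_sf (p := 2)).
Qed.
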